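(* Assume the continuum hypothesis, fix a well-ordering $\lessdot$ of $[0,1]$ of order type $\omega_1$, and let $\mathcal{X}=[0,1]$, $\mathcal{H}=\{x\mapsto\mathbf 1_{x\,\underline{\lessdot}\,z}:z\in[0,1]\}$ (where $x\,\underline{\lessdot}\,z$ means $x\lessdot z$ or $x=z$). Then the ordinal Littlestone dimension satisfies $\mathrm{LD}(\mathcal{H})\ge\omega_1$ (i.e. either $\mathrm{LD}(\mathcal{H})=\mathsf\Omega$ or $\mathrm{LD}(\mathcal{H})$ is an ordinal $\ge\omega_1$).
   Context: A (finite) Littlestone tree of depth $d<\infty$ for $\mathcal{H}$ is a collection $\{x_{\mathbf u}:0\le k<d,\ \mathbf u\in\{0,1\}^k\}\subseteq\mathcal{X}$ such that for every $\mathbf y\in\{0,1\}^d$ there is $h\in\mathcal{H}$ with $h(x_{\mathbf y_{\le k}})=y_{k+1}$ for $0\le k<d$, where $\mathbf y_{\le k}=(y_1,\ldots,y_k)$; the empty tree $\varnothing$ has depth $0$. An infinite Littlestone tree is the analogous collection with $d=\infty$ (every finite initial path realized by some $h\in\mathcal{H}$). For finite Littlestone trees write $\mathbf t'\prec\mathbf t$ if $\mathbf t$ is obtained from $\mathbf t'$ by removing its leaves (deepest level). If $\mathcal{H}$ has no infinite Littlestone tree, $\prec$ is well-founded and its rank is defined by transfinite recursion: $\mathrm{rank}(\mathbf t)=0$ if no $\mathbf t'\prec\mathbf t$ exists, else $\mathrm{rank}(\mathbf t)=\sup\{\mathrm{rank}(\mathbf t')+1:\mathbf t'\prec\mathbf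 t\}$. The ordinal Littlestone dimension is $\mathrm{LD}(\mathcal{H})=-1$ if $\mathcal{H}=\varnothing$; $\mathrm{LD}(\mathcal{H})=\mathsf\Omega$ (a symbol larger than every ordinal) if $\mathcal{H}$ has an infinite Littlestone tree; and $\mathrm{LD}(\mathcal{H})=\mathrm{rank}(\varnothing)$ otherwise. $\omega_1$ is the first uncountable ordinal. *)

From Stdlib Require Import Reals List.
Open Scope R_scope.

Definition I01 : Type := { x : R | 0 <= x <= 1 }.

Definition countable_pred {T : Type} (A : T -> Prop) : Prop :=
  exists f : nat -> T, forall x, A x -> exists n : nat, f n = x.

(** Continuum hypothesis: every set of reals is countable or admits an
    injection of R into it (hence, by Schroeder-Bernstein, has the
    cardinality of R). *)
Definition CH : Prop :=
  forall A : R -> Prop,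
    countable_pred A \/
    exists g : R -> R, (forall x y, g x = g y -> x = y) /\ (forall x, A (g x)).

Definition strict_well_order {T : Type} (lt : T -> T -> Prop) : Prop :=
  well_founded lt /\
  (forall x y z, lt x y -> lt y z -> lt x z) /\
  (forall x y, lt x y \/ x = y \/ lt y x).

(** A well-ordering of a type (whose carrier is uncountable, such as [0,1])
    has order type omega_1 iff each proper initial segment is countable. *)
Definition order_type_omega1 {T : Type} (lt : T -> T -> Prop) : Prop :=
  strict_well_order lt /\ forall z : T, countable_pred (fun y => lt y z).

Definition thresholds {T : Type} (lt : T -> T -> Prop) (h : T -> bool) : Prop :=
  exists z : T, forall x : T, h x = true <-> (lt x z \/ x = z).

Section Littlestone.
Context {X : Type}.
Variable H : (X -> bool) -> Prop.

(** A (finite) Littlestone tree of depth d is given by its node labelling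
    [f : list bool -> X]; only the values at lists of length < d matter
    (the node x_u, u in {0,1}^k, k < d, is [f u]). *)
Definition isLTree (d : nat) (f : list bool -> X) : Prop :=
  forall ys : list bool, length ys = d ->
    exists h, H h /\
      forall k : nat, (k < d)%nat -> h (f (firstn k ys)) = nth k ys false.

Definition has_infinite_LTree : Prop :=
  exists f : list bool -> X, forall d : nat, isLTree d f.

Definition LT_prec (d' : nat) (f' : list bool -> X) (d : nat) (f : list bool -> X) : Prop :=
  isLTree d' f' /\ d' = S d /\ forall u : list bool, (length u < d)%nat -> f' u = f u.

(** [rank_ge W ltW d f w] : for a well-order (W, ltW), rank((d,f)) >= the
    order type of the initial segment {v | ltW v w}.  By well-founded
    recursion on w this is characterised by:
      rank(t) >= beta  iff  for all gamma < beta there is t' prec t with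
      rank(t') >= gamma,
    which is equivalent to the transfinite definition
    rank(t) = sup { rank(t') + 1 : t' prec t }. *)
Inductive rank_ge (W : Type) (ltW : W -> W -> Prop) :
    nat -> (list bool -> X) -> W -> Prop :=
| rank_ge_intro : forall d f w,
    (forall v, ltW v w -> exists d' f', LT_prec d' f' d f /\ rank_ge W ltW d' f' v) ->
    rank_ge W ltW d f w.

(** rank(empty tree) >= order type of (W, ltW): for every w there is a
    depth-1 Littlestone tree (the trees t' prec empty tree) of rank >= the
    order type of {v | ltW v w}. *)
Definition rank_empty_ge (W : Type) (ltW : W -> W -> Prop) : Prop :=
  forall w : W, exists f' : list bool -> X, isLTree 1 f' /\ rank_ge W ltW 1 f' w.

(** LD(H) >= omega_1 : either LD(H) = Omega (an infinite Littlestone tree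
    exists), or there is none and rank(empty tree) >= alpha for every
    countable ordinal alpha, presented as a countable well-order. *)
Definition LD_ge_omega1 : Prop :=
  has_infinite_LTree \/
  (~ has_infinite_LTree /\
   forall (W : Type) (ltW : W -> W -> Prop),
     (exists e : nat -> W, forall w, exists n, e n = w) ->
     strict_well_order ltW ->
     rank_empty_ge W ltW).
End Littlestone.

From Stdlib Require Import Reals List Lra Lia Cantor.
From Stdlib Require Import Classical ClassicalEpsilon.
Open Scope R_scope.

(* Call a set V of hypotheses of rank >= w if it is nonempty and, for every
   v < w, some point x splits it into the two sets {h in V | h x = b}, each of
   rank >= v.  Growing a tree one level at a time, a tree all of whose leaves
   carry version spaces of rank >= w has Littlestone rank >= w.

   For thresholds along a well-ordering of type omega_1, for every a and every
   v in a countable well-order there is b such that the interval version space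
   {1_{. <= z} | a <= z < b} has rank >= v.  By induction on v: for each u < v
   pick a < b1 < b2 such that [a, b1) and [b1, b2) have rank >= u; the
   countably many b2 have a common strict upper bound b, since initial segments
   are countable while [0,1] is not; querying b1 then splits [a, b) into
   supersets of [a, b1) and [b1, b2). *)

(* Nested intervals, the (n+1)-th of which avoids s n. *)
Fixpoint trisect (s : nat -> R) (n : nat) : R * R :=
  match n with
  | O => (0, 1)
  | S m =>
      let a := fst (trisect s m) in
      let b := snd (trisect s m) in
      let d := (b - a) / 3 in
      if Rlt_le_dec (s m) (b - d) then (b - d, b) else (a, a + d)
  end.

Lemma trisect_nonempty s n : fst (trisect s n) < snd (trisect s n).
Proof.
  induction n as [|n IH]; simpl; [lra|].
  destruct (Rlt_le_dec _ _); simpl; lra.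
Qed.

Lemma trisect_step s n :
  fst (trisect s n) <= fst (trisect s (S n)) /\
  snd (trisect s (S n)) <= snd (trisect s n) /\
  (s n < fst (trisect s (S n)) \/ snd (trisect s (S n)) < s n).
Proof.
  pose proof (trisect_nonempty s n).
  simpl. destruct (Rlt_le_dec _ _); simpl; lra.
Qed.

Lemma trisect_mono s m n : (m <= n)%nat ->
  fst (trisect s m) <= fst (trisect s n) /\ snd (trisect s n) <= snd (trisect s m).
Proof.
  induction 1 as [|n _ IH]; [lra|].
  destruct (trisect_step s n) as [Hl [Hr _]]. lra.
Qed.

Lemma trisect_left_le_right s m n : fst (trisect s m) <= snd (trisect s n).
Proof.
  pose proof (trisect_nonempty s m). pose proof (trisect_nonempty s n).
  destruct (Nat.le_ge_cases m n) as [Hmn|Hnm].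
  - destruct (trisect_mono s m n Hmn). lra.
  - destruct (trisect_mono s n m Hnm). lra.
Qed.

Lemma unit_interval_uncountable (s : nat -> R) :
  exists x, 0 <= x <= 1 /\ forall n, s n <> x.
Proof.
  set (E := fun x => exists n, x = fst (trisect s n)).
  destruct (completeness E) as [x [Hub Hlub]].
  - exists 1. intros y [n ->]. exact (trisect_left_le_right s n 0).
  - exists 0, 0%nat. reflexivity.
  - assert (Hle : forall n, fst (trisect s n) <= x) by (intros n; apply Hub; now exists n).
    assert (Hge : forall n, x <= snd (trisect s n)).
    { intros n. apply Hlub. intros y [m ->]. apply trisect_left_le_right. }
    exists x. split; [split; [apply (Hle 0%nat) | apply (Hge 0%nat)]|].
    intros n Hsn. destruct (trisect_step s n) as [_ [_ Hout]].
    specialize (Hle (S n)). specialize (Hge (S n)). lra.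
Qed.

Lemma I01_uncountable (g : nat -> I01) : exists y : I01, forall n, g n <> y.
Proof.
  destruct (unit_interval_uncountable (fun n => proj1_sig (g n))) as [x [Hx Hg]].
  exists (exist _ x Hx). intros n Hn. apply (Hg n). now rewrite Hn.
Qed.

Lemma well_founded_irrefl {T : Type} (r : T -> T -> Prop) :
  well_founded r -> forall x, ~ r x x.
Proof.
  intros Hwf x. induction x as [x IH] using (well_founded_ind Hwf).
  intros Hxx. exact (IH x Hxx Hxx).
Qed.

Section VersionSpaceRank.
Context {X : Type} (W : Type) (ltW : W -> W -> Prop).

Inductive vspace_rank_ge : ((X -> bool) -> Prop) -> W -> Prop :=
| vspace_rank_ge_intro V w :
    (exists h, V h) ->
    (forall v, ltW v w ->
       exists x, forall b, vspace_rank_ge (fun h => V h /\ h x = b) v) ->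
    vspace_rank_ge V w.

Lemma vspace_rank_ge_nonempty V w : vspace_rank_ge V w -> exists h, V h.
Proof. now intros [V0 w0 Hne _]. Qed.

Lemma vspace_rank_ge_split V w v : vspace_rank_ge V w -> ltW v w ->
  exists x, forall b, vspace_rank_ge (fun h => V h /\ h x = b) v.
Proof. intros [V0 w0 _ Hsplit] Hv. exact (Hsplit v Hv). Qed.

Lemma vspace_rank_ge_mono : forall V w, vspace_rank_ge V w ->
  forall V' : (X -> bool) -> Prop, (forall h, V h -> V' h) -> vspace_rank_ge V' w.
Proof.
  fix IH 3. intros V w [V0 w0 [h Hh] Hsplit] V' HV.
  constructor; [exists h; auto|].
  intros v Hv. destruct (Hsplit v Hv) as [x Hx]. exists x. intros b.
  apply (IH _ _ (Hx b)). intros h' [Hh' Hb]. auto.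
Qed.

End VersionSpaceRank.

Section LittlestoneTrees.
Context {X : Type} (H : (X -> bool) -> Prop) (W : Type) (ltW : W -> W -> Prop).
Hypothesis ltW_wf : well_founded ltW.

Definition consistent (d : nat) (f : list bool -> X) (ys : list bool) (h : X -> bool) :=
  forall k, (k < d)%nat -> h (f (firstn k ys)) = nth k ys false.

Definition version_space d f ys (h : X -> bool) : Prop := H h /\ consistent d f ys h.

Lemma isLTree_of_vspace_rank_ge d f w :
  (forall ys, length ys = d -> vspace_rank_ge W ltW (version_space d f ys) w) ->
  isLTree H d f.
Proof.
  intros HG ys Hl. exact (vspace_rank_ge_nonempty _ _ _ _ (HG ys Hl)).
Qed.

Lemma consistent_snoc d f f' ys b h :
  length ys = d -> (forall u, (length u < d)%nat -> f' u = f u) ->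
  consistent d f ys h -> h (f' ys) = b -> consistent (S d) f' (ys ++ b :: nil) h.
Proof.
  intros Hl Hf' Hc Hb k Hk. rewrite firstn_app.
  destruct (Nat.lt_ge_cases k d) as [Hkd|Hkd].
  - replace (k - length ys)%nat with O by lia.
    rewrite app_nil_r, app_nth1, Hf' by (rewrite ?length_firstn; lia).
    exact (Hc k Hkd).
  - replace k with d in * by lia. subst d.
    rewrite firstn_all, Nat.sub_diag, app_nil_r, app_nth2, Nat.sub_diag by lia.
    exact Hb.
Qed.

Lemma LTree_extension d f w v :
  (forall ys, length ys = d -> vspace_rank_ge W ltW (version_space d f ys) w) ->
  ltW v w ->
  exists f', LT_prec H (S d) f' d f /\
    forall ys, length ys = S d -> vspace_rank_ge W ltW (version_space (S d) f' ys) v.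
Proof.
  intros HG Hv.
  destruct (choice (fun ys x => length ys = d ->
      forall b, vspace_rank_ge W ltW (fun h => version_space d f ys h /\ h x = b) v))
    as [g Hg].
  { intros ys. destruct (Nat.eq_dec (length ys) d) as [Hl|Hl].
    - destruct (vspace_rank_ge_split _ _ _ _ _ (HG ys Hl) Hv) as [x Hx].
      now exists x.
    - now exists (f ys). }
  set (f' := fun u => if Nat.ltb (length u) d then f u else g u).
  assert (Hf' : forall u, (length u < d)%nat -> f' u = f u).
  { intros u Hu. unfold f'. now rewrite (proj2 (Nat.ltb_lt _ _) Hu). }
  assert (HG' : forall ys, length ys = S d ->
            vspace_rank_ge W ltW (version_space (S d) f' ys) v).
  { intros ys' Hl'.
    destruct (exists_last (l := ys')) as [ys [b ->]]; [now intros ->|].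
    rewrite length_app in Hl'. simpl in Hl'.
    assert (Hl : length ys = d) by lia.
    apply (vspace_rank_ge_mono _ _ _ _ (Hg ys Hl b)).
    intros h [[HH Hc] Hb]. split; [exact HH|].
    apply (consistent_snoc d f); auto.
    unfold f'. now rewrite Hl, Nat.ltb_irrefl. }
  exists f'. split; [|exact HG'].
  split; [exact (isLTree_of_vspace_rank_ge _ _ _ HG')|].
  split; [reflexivity|exact Hf'].
Qed.

Lemma rank_ge_of_vspace_rank_ge : forall w d f,
  (forall ys, length ys = d -> vspace_rank_ge W ltW (version_space d f ys) w) ->
  rank_ge H W ltW d f w.
Proof.
  intros w. induction w as [w IH] using (well_founded_ind ltW_wf).
  intros d f HG. constructor. intros v Hv.
  destruct (LTree_extension d f w v HG Hv) as [f' [Hprec HG']].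
  exists (S d), f'. split; [exact Hprec|]. exact (IH v Hv _ _ HG').
Qed.

Lemma rank_empty_ge_of_splits :
  (forall w, exists x, forall b, vspace_rank_ge W ltW (fun h => H h /\ h x = b) w) ->
  rank_empty_ge H W ltW.
Proof.
  intros Hsplit w. destruct (Hsplit w) as [x Hx].
  set (f := fun _ : list bool => x).
  assert (HG : forall ys, length ys = 1%nat ->
            vspace_rank_ge W ltW (version_space 1 f ys) w).
  { intros [|b [|]] Hl; try discriminate.
    apply (vspace_rank_ge_mono _ _ _ _ (Hx b)). intros h [HH Hb].
    split; [exact HH|]. intros k Hk. now replace k with O by lia. }
  exists f. split.
  - exact (isLTree_of_vspace_rank_ge _ _ _ HG).
  - exact (rank_ge_of_vspace_rank_ge _ _ _ HG).
Qed.

End LittlestoneTrees.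

Section Thresholds.
Context {T : Type} (lt : T -> T -> Prop).
Hypothesis lt_irrefl : forall x, ~ lt x x.
Hypothesis lt_trans : forall x y z, lt x y -> lt y z -> lt x z.
Hypothesis lt_total : forall x y, lt x y \/ x = y \/ lt y x.
Hypothesis segments_countable : forall z, countable_pred (fun y => lt y z).
Hypothesis T_uncountable : forall g : nat -> T, exists y, forall n, g n <> y.
Context (W : Type) (ltW : W -> W -> Prop).
Hypothesis W_countable : exists e : nat -> W, forall w, exists n, e n = w.
Hypothesis ltW_wf : well_founded ltW.

Lemma seq_strict_upper_bound (s : nat -> T) : exists b, forall n, lt (s n) b.
Proof.
  destruct (choice (fun n (e : nat -> T) => forall y, lt y (s n) -> exists m, e m = y)
              (fun n => segments_countable (s n))) as [e He].
  destruct (T_uncountable (fun k => match of_nat k with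
                                   | (n, O) => s n
                                   | (n, S m) => e n m
                                   end)) as [b Hb].
  exists b. intros n.
  destruct (lt_total (s n) b) as [Hlt|[Heq|Hgt]]; [exact Hlt| |]; exfalso.
  - apply (Hb (to_nat (n, O))). now rewrite cancel_of_to.
  - destruct (He n b Hgt) as [m Hm].
    apply (Hb (to_nat (n, S m))). now rewrite cancel_of_to.
Qed.

Definition threshold (z x : T) : bool :=
  if excluded_middle_informative (lt x z \/ x = z) then true else false.

Lemma threshold_true z x : threshold z x = true <-> lt x z \/ x = z.
Proof.
  unfold threshold. destruct (excluded_middle_informative _); split; tauto || discriminate.
Qed.

Lemma threshold_false z x : threshold z x = false <-> lt z x.
Proof.
  unfold threshold. destruct (excluded_middle_informative _) as [Hxz|Hxz]; split.
  - discriminate.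
  - intros Hzx. exfalso.
    destruct Hxz as [Hxz| ->]; [apply (lt_irrefl z); eauto|exact (lt_irrefl z Hzx)].
  - intros _. destruct (lt_total x z) as [|[|]]; tauto.
  - reflexivity.
Qed.

Definition threshold_interval (a b : T) (h : T -> bool) : Prop :=
  exists z, (lt a z \/ a = z) /\ lt z b /\ h = threshold z.

Lemma threshold_interval_lt a b h : threshold_interval a b h -> lt a b.
Proof. intros [z [[Haz| <-] [Hzb _]]]; eauto. Qed.

Lemma threshold_interval_rank_ge : forall v a,
  exists b, vspace_rank_ge W ltW (threshold_interval a b) v.
Proof.
  intros v. induction v as [v IH] using (well_founded_ind ltW_wf). intros a.
  destruct (choice (fun u (p : T * T) => ltW u v ->
      vspace_rank_ge W ltW (threshold_interval a (fst p)) u /\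
      vspace_rank_ge W ltW (threshold_interval (fst p) (snd p)) u)) as [P HP].
  { intros u. destruct (classic (ltW u v)) as [Hu|Hu]; [|now exists (a, a)].
    destruct (IH u Hu a) as [b1 H1]. destruct (IH u Hu b1) as [b2 H2].
    now exists (b1, b2). }
  destruct W_countable as [e He].
  destruct (seq_strict_upper_bound
              (fun n => match n with O => a | S m => snd (P (e m)) end)) as [b Hb].
  exists b. constructor.
  - exists (threshold a), a. split; [now right|]. split; [exact (Hb O)|reflexivity].
  - intros u Hu. destruct (HP u Hu) as [Hlow Hhigh].
    assert (Hyb : lt (snd (P u)) b) by (destruct (He u) as [n <-]; exact (Hb (S n))).
    destruct (P u) as [x y]. simpl in *.
    destruct (vspace_rank_ge_nonempty _ _ _ _ Hlow) as [h1 Hax%threshold_interval_lt].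
    destruct (vspace_rank_ge_nonempty _ _ _ _ Hhigh) as [h2 Hxy%threshold_interval_lt].
    exists x. intros [|].
    + apply (vspace_rank_ge_mono _ _ _ _ Hhigh).
      intros h [z [Hxz [Hzy ->]]]. split; [|now apply threshold_true].
      exists z. split; [left; destruct Hxz as [|<-]|]; eauto.
    + apply (vspace_rank_ge_mono _ _ _ _ Hlow).
      intros h [z [Haz [Hzx ->]]]. split; [|now apply threshold_false].
      exists z. eauto 6.
Qed.

Lemma thresholds_split_rank_ge (a : T) w :
  exists x, forall c, vspace_rank_ge W ltW (fun h => thresholds lt h /\ h x = c) w.
Proof.
  destruct (threshold_interval_rank_ge w a) as [x Hlow].
  destruct (threshold_interval_rank_ge w x) as [b Hhigh].
  exists x. intros [|].
  - apply (vspace_rank_ge_mono _ _ _ _ Hhigh). intros h [z [Hxz [_ ->]]].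
    split; [exists z; apply threshold_true|now apply threshold_true].
  - apply (vspace_rank_ge_mono _ _ _ _ Hlow). intros h [z [_ [Hzx ->]]].
    split; [exists z; apply threshold_true|now apply threshold_false].
Qed.

End Thresholds.

Definition I01_zero : I01 := exist _ 0 (conj (Rle_refl 0) Rle_0_1).

Theorem mainTheorem19 :
  CH ->
  forall lt : I01 -> I01 -> Prop,
    order_type_omega1 lt ->
    LD_ge_omega1 (thresholds lt).
Proof.
  intros _ lt [[lt_wf [lt_trans lt_total]] segments_countable].
  destruct (classic (has_infinite_LTree (thresholds lt))) as [Hinf|Hfin];
    [now left|right; split; [exact Hfin|]].
  intros W ltW W_countable [ltW_wf _].
  apply rank_empty_ge_of_splits; [exact ltW_wf|]. intros w.
  exact (thresholds_split_rank_ge lt (well_founded_irrefl lt lt_wf) lt_trans lt_total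
           segments_countable I01_uncountable W ltW W_countable ltW_wf I01_zero w).
Qed.
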